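(* Let $e\ge4$, let $I\subseteq\mathbb Z$ be a union of $c$ congruence classes modulo $e$ with $2\le c\le e-2$, put $\bar c=e-c$, and fix $u$ with $0\le u\le n$. Suppose $\nu$ is an $I$-separated $(u,I)$-partition such that $\nu_{\bar I}$ is not $\bar c$-restricted, and let $s\ge1$ be minimal with $(\nu_{\bar I})_s-(\nu_{\bar I})_{s+1}\ge\bar c$. Let $\tau$ be the partition with $\tau_r=(\nu_{\bar I})_r-\bar c$ for $r\le s$ and $\tau_r=(\nu_{\bar I})_r$ for $r>s$ (so $\nu_{\bar I}=(1^s)\,\|_{\bar c}\,\tau$). Define the $(u,I)$-partition $\xi$ by $\xi_I=(s)\,\|_c\,\nu_I$ (the partition whose parts are the parts of $\nu_I$ together with $c$ copies of $s$) and $\xi_{\bar I}=\tau$. Then $\nu$ and $\xi$ are $(e,\bar c)$-equivalent.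
   Context: $\bar I=\mathbb Z\setminus I$. Fix a large integer $n$ divisible by $e$; abacus displays have $n$ beads: the display of $\lambda$ is the set of occupied positions $\{\lambda_r+r-1:1\le r\le n\}\subseteq\mathbb Z_{\ge0}$, and a set of $N$ occupied positions $b_1>\dots>b_N$ determines the partition with parts $b_r+r-N$. Discarding positions not in $I$ and relabelling the rest $0,1,2,\dots$ in increasing order gives the display of a partition $\lambda_I$; discarding positions in $I$ gives $\lambda_{\bar I}$. $\lambda$ is a $(u,I)$-partition if exactly $u$ of its $n$ beads lie in positions in $I$; such a partition is determined by $(\lambda_I,\lambda_{\bar I})$, and any pair of partitions arises. $\lambda$ is $I$-separated if the first empty position in $I$ comes after the last occupied position in $\bar I$. For partitions $\alpha,\beta$: $\alpha\,\|_{\bar c}\,\beta=(\bar c\alpha_1+\beta_1,\bar c\alpha_2+\beta_2,\dots)$, and $\alpha\,\|_c\,\beta$ is the partition formed by the parts of $\beta$ together with $c$ copies of each part of $\alpha$, in decreasing order. A partition is $k$-restricted if $\lambda_r-\lambda_{r+1}<k$ for all $r$. $(e,\bar c)$-ladders are the sets $\{(r+k(\bar c-e),c'+k\bar c):k\in\mathbb Z\}$ for $(r,c')\in\mathbb Z^2$, and two partitions are $(e,\bar c)$-equivalent if they have the same number of nodes in every $(e,\bar c)$-ladder. *)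

From HB Require Import structures.
From mathcomp Require Import all_boot all_order all_algebra.
From mathcomp Require Import boolp.
Set Implicit Arguments. Unset Strict Implicit. Unset Printing Implicit Defensive.
Import Order.TTheory GRing.Theory Num.Theory.

(* A partition is a nonincreasing sequence of positive naturals.
   pt la r is the part la_r (1-indexed), 0 beyond the length. *)
Definition is_partition (la : seq nat) : bool :=
  sorted geq la && all (fun x => 0 < x) la.

Definition pt (la : seq nat) (r : nat) : nat := nth 0 la r.-1.

(* Abacus display of la with n beads: positions la_r + n - r, 1 <= r <= n. *)
Definition display (n : nat) (la : seq nat) : seq nat :=
  [seq pt la r.+1 + (n - r.+1) | r <- iota 0 n].

(* Partition determined by a set of N occupied positions b_1 > ... > b_N:
   parts b_r + r - N (zero parts discarded). *)
Definition part_of_beads (B : seq nat) : seq nat :=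
  let bs := sort geq B in
  let N := size bs in
  [seq x <- [seq nth 0 bs r + r.+1 - N | r <- iota 0 N] | 0 < x].

(* relabelling of positions in P : keep P-positions, relabel 0,1,2,... *)
Definition relabel (P : pred nat) (p : nat) : nat := count P (iota 0 p).

Definition inI (I : pred int) : pred nat := fun p => I (Posz p).

Definition I_part (I : pred int) (n : nat) (la : seq nat) : seq nat :=
  part_of_beads [seq relabel (inI I) p | p <- display n la & inI I p].
Definition barI_part (I : pred int) (n : nat) (la : seq nat) : seq nat :=
  part_of_beads [seq relabel (predC (inI I)) p | p <- display n la & ~~ inI I p].

Definition uI_partition (I : pred int) (n u : nat) (la : seq nat) : Prop :=
  count (inI I) (display n la) = u.

Definition I_separated (I : pred int) (n : nat) (la : seq nat) : Prop :=
  forall p q : nat, inI I p -> p \notin display n la ->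
    ~~ inI I q -> q \in display n la -> q < p.

Definition parcat (c : nat) (alpha beta : seq nat) : seq nat :=
  sort geq (beta ++ flatten [seq nseq c a | a <- alpha]).

Definition tau (cb s : nat) (nb : seq nat) : seq nat :=
  [seq x <- [seq (if r < s then nth 0 nb r - cb else nth 0 nb r)
            | r <- iota 0 (size nb)] | 0 < x].

Definition nodes (la : seq nat) : seq (int * int) :=
  [seq (Posz i.+1, Posz j.+1) | i <- iota 0 (size la), j <- iota 0 (nth 0 la i)].

Definition in_ladder (e cb : nat) (r c' : int) (x : int * int) : bool :=
  `[< exists k : int, x.1 = (r + k * (Posz cb - Posz e))%R
                   /\ x.2 = (c' + k * Posz cb)%R >].

Definition ladder_equiv (e cb : nat) (la mu : seq nat) : Prop :=
  forall r c' : int,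
    count (in_ladder e cb r c') (nodes la) = count (in_ladder e cb r c') (nodes mu).

From mathcomp Require Import all_boot all_algebra.
From mathcomp Require Import boolp.
From mathcomp Require Import zify ring.
Set Implicit Arguments. Unset Strict Implicit. Unset Printing Implicit Defensive.
Import GRing.Theory Num.Theory.

(* A node (i+1, y) of a partition with at most n parts is present
   iff at least i+1 beads of its n-bead abacus display lie at positions
   >= y + n - i - 1.  Splitting the beads into I- and bar-I-positions and
   relabelling, this bead count is the sum of the corresponding bead counts
   of the I-part and of the bar-I-part.  Consecutive nodes of an
   (e, e-c)-ladder test positions exactly e apart, i.e. one period of I, so
   along a ladder the relabelled positions grow by c and e - c per step.
   By I-separation each node test is the sum of an I-contribution and a
   bar-I-contribution, up to a term independent of the partition.  Passing
   from nu to xi changes these contributions only when the level of the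
   ladder lies in (u, u + s]: there the bar-I-contribution loses exactly one
   node (a progression of step e - c meets a window of width e - c once) and
   the I-contribution gains exactly one (a progression of step c meets the c
   rows created by the new parts equal to s once).
   Layout: counting and relabelling lemmas; part_of_beads and displays; the
   I/bar-I decomposition and separation; ladders and their lowest node; the
   transfer of ladder counts between two pairs of parts; the parts of nu and
   xi; the theorem. *)

(* Counting a predicate that is down-closed on [0, N): its count is the
   length of its initial run, so thresholds on the count are read off
   from a single value of the predicate. *)
Lemma downclosed_below (P : pred nat) N :
  (forall i, i.+1 < N.+1 -> P i.+1 -> P i) -> P N -> forall i, i <= N -> P i.
Proof.
move=> hdown hN i hi.
have hdist : forall k, k <= N -> P (N - k).
  elim=> [|k IH] hk; first by rewrite subn0.
  have := IH (ltnW hk); have -> : N - k = (N - k.+1).+1 by lia.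
  by apply: hdown; lia.
by have := hdist (N - i) (leq_subr _ _); rewrite subKn.
Qed.

Lemma leq_count_downclosed (P : pred nat) N :
  (forall i, i.+1 < N -> P i.+1 -> P i) ->
  forall t, (t <= count P (iota 0 N)) = (t == 0) || ((t <= N) && P t.-1).
Proof.
elim: N => [|N IH] hdown t; first by case: t.
rewrite -addn1 iotaD count_cat /= add0n addn0.
have hdown' : forall i, i.+1 < N -> P i.+1 -> P i.
  by move=> i hi; apply: hdown; lia.
case hPN: (P N).
- have hall := downclosed_below hdown hPN.
  have -> : count P (iota 0 N) = N.
    rewrite -[RHS](size_iota 0 N) -count_predT.
    by apply: eq_in_count => i; rewrite mem_iota => /andP[_ hi]; rewrite hall //; lia.
  case: t => [|t] //=; rewrite addn1 ltnS.
  by case: (leqP t N) => //= ht; rewrite hall.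
- rewrite addn0 IH //; case: t => [|t] //=.
  have -> : (t < N + 1) = (t < N) || (t == N) by lia.
  by case: eqP => [-> | _]; rewrite ?ltnn ?hPN ?andbF ?orbF.
Qed.

Section PeriodicRelabel.
Variables (P : pred nat) (e : nat).
Hypothesis P_periodic : forall p, P (p + e) = P p.

Lemma count_periodic_window m : count P (iota m e) = count P (iota 0 e).
Proof.
elim: m => [//|m <-]; case: e P_periodic => [//|e'] hper.
have -> : iota m.+1 e'.+1 = iota m.+1 e' ++ [:: m.+1 + e'].
  by rewrite -[X in iota _ X = _]addn1 iotaD.
by rewrite count_cat /= addSnnS hper addn0 addnC.
Qed.

Lemma relabel_add_periods x d :
  relabel P (x + e * d) = relabel P x + d * count P (iota 0 e).
Proof.
have period_step y : relabel P (y + e) = relabel P y + count P (iota 0 e).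
  by rewrite /relabel iotaD count_cat add0n count_periodic_window.
elim: d => [|d IH]; first by rewrite muln0 mul0n !addn0.
have -> : x + e * d.+1 = x + e * d + e by rewrite mulnS; lia.
by rewrite period_step IH mulSn; lia.
Qed.

End PeriodicRelabel.

Lemma relabel_mono (P : pred nat) x y : x <= y -> relabel P x <= relabel P y.
Proof. by move=> h; rewrite /relabel -(subnKC h) iotaD count_cat leq_addr. Qed.

Lemma relabelS (P : pred nat) x : relabel P x.+1 = relabel P x + P x.
Proof. by rewrite /relabel -addn1 iotaD count_cat /= add0n addn0. Qed.

Lemma relabel_leq (P : pred nat) x p : P p -> (x <= p) = (relabel P x <= relabel P p).
Proof.
move=> hp; apply/idP/idP; first exact: relabel_mono.
apply: contraLR; rewrite -!ltnNge => h.
by apply: leq_trans (relabel_mono P h); rewrite relabelS hp addn1.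
Qed.

Lemma relabel_predC (P : pred nat) x : relabel P x + relabel (predC P) x = x.
Proof. by rewrite /relabel count_predC size_iota. Qed.

Lemma geq_trans : transitive geq.
Proof. by move=> a b c /= h1 h2; apply: leq_trans h2 h1. Qed.

Lemma gtn_trans : transitive gtn.
Proof. by move=> a b c /= h1 h2; apply: ltn_trans h2 h1. Qed.

Lemma sorted_map_iota (R : rel nat) (f : nat -> nat) m k :
  (forall i, m <= i -> i.+1 < m + k -> R (f i) (f i.+1)) -> sorted R (map f (iota m k)).
Proof.
move=> hR; apply/(sortedP 0) => i; rewrite size_map size_iota => hi.
rewrite !(nth_map 0) ?size_iota ?nth_iota ?addnS //; try lia.
by apply: hR; lia.
Qed.

Lemma sorted_geq_nth (L : seq nat) i j :
  sorted geq L -> i <= j -> nth 0 L j <= nth 0 L i.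
Proof.
move=> hs hij; case: (ltnP j (size L)) => hj; last by rewrite nth_default.
by apply: (sorted_leq_nth geq_trans (fun x => leqnn x) 0 hs); rewrite ?inE //; lia.
Qed.

Lemma sorted_gtn_nth (L : seq nat) i j :
  sorted gtn L -> i < j < size L -> nth 0 L j < nth 0 L i.
Proof.
move=> hs /andP[hij hj].
by apply: (sorted_ltn_nth gtn_trans 0 hs); rewrite ?inE //; lia.
Qed.

Lemma sorted_gtn_lb (L : seq nat) i :
  sorted gtn L -> i < size L -> size L - i.+1 <= nth 0 L i.
Proof.
elim: L i => [//|x L IH] i /= hs hi.
have hL : sorted gtn L := path_sorted hs.
case: i hi => [|i] hi /=; last by have := IH i hL; lia.
case: L hs hL IH {hi} => [|y L] //= /andP[hxy _] hL IH.
by have := IH 0 hL (ltn0Sn _); rewrite /=; lia.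
Qed.

Lemma nth_filter_pos (L : seq nat) i :
  sorted geq L -> nth 0 [seq x <- L | 0 < x] i = nth 0 L i.
Proof.
elim: L i => [//|x L IH] i hs /=.
case: (posnP x) => [hx | hx]; last by case: i => [|i] //=; apply/IH/(path_sorted hs).
have hall : all (fun y => y == 0) L.
  by apply: sub_all (order_path_min geq_trans hs) => y /=; rewrite hx; lia.
have -> : [seq x <- L | 0 < x] = [::].
  by apply/eqP; rewrite -size_eq0 size_filter -leqn0 leqNgt -has_count;
    apply/hasP => -[y /(allP hall) /eqP ->].
rewrite nth_nil hx; case: i => //= i.
case: (ltnP i (size L)) => hi; last by rewrite nth_default.
by move/allP: hall => /(_ _ (mem_nth 0 hi)) /eqP ->.
Qed.

Lemma leq_nth_count (L : seq nat) th i : sorted geq L -> 0 < th ->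
  (th <= nth 0 L i) = (i < count (fun x => th <= x) L).
Proof.
move=> hs hth; rewrite -{2}(mkseq_nth 0 L) /mkseq count_map leq_count_downclosed /=.
  case: (ltnP i (size L)) => hi //.
  by rewrite nth_default // leqNgt hth.
by move=> j hj h; apply: leq_trans h (sorted_geq_nth hs (leqnSn j)).
Qed.

Definition beads_above (N : nat) (g : seq nat) (w : nat) : nat :=
  count (fun b => w <= b) (display N g).

Lemma leq_beads_above (g : seq nat) N w t : sorted geq g ->
  (t <= beads_above N g w) = (t == 0) || (t <= N) && (w <= nth 0 g t.-1 + (N - t)).
Proof.
move=> hs; rewrite /beads_above /display count_map leq_count_downclosed; first by case: t.
by move=> i _; rewrite /preim /pt /= => h; have := sorted_geq_nth hs (leqnSn i); lia.
Qed.

(* If g has at most N - w parts, positions 0 .. w-1 are all occupied. *)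
Lemma beads_above_full (g : seq nat) N w :
  sorted geq g -> size g <= N - w -> w <= N -> beads_above N g w = N - w.
Proof.
move=> hg hsz hw; apply/eqP; rewrite eqn_leq; apply/andP; split.
  rewrite leqNgt; apply/negP; rewrite -[_ < _]/(_.+1 <= _) leq_beads_above //=.
  by case/andP => h1; rewrite nth_default; lia.
rewrite leq_beads_above //; case: (N - w =P 0) => [-> //| hne].
by apply/orP; right; apply/andP; split; lia.
Qed.

Section PartOfBeads.
Variable B : seq nat.
Hypothesis B_sorted : sorted gtn B.

Lemma part_of_beadsE :
  part_of_beads B = [seq x <- [seq nth 0 B r + r.+1 - size B | r <- iota 0 (size B)] | 0 < x].
Proof.
by rewrite /part_of_beads (sorted_sort geq_trans (sub_sorted (fun a b => @ltnW b a) B_sorted)).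
Qed.

Lemma beads_parts_sorted :
  sorted geq [seq nth 0 B r + r.+1 - size B | r <- iota 0 (size B)].
Proof.
apply: sorted_map_iota => j _ hj.
by have := sorted_gtn_nth (i:=j) (j:=j.+1) B_sorted; rewrite add0n in hj; lia.
Qed.

Lemma nth_part_of_beads i :
  nth 0 (part_of_beads B) i = if i < size B then nth 0 B i + i.+1 - size B else 0.
Proof.
rewrite part_of_beadsE nth_filter_pos; last exact: beads_parts_sorted.
case: (ltnP i (size B)) => hi; first by rewrite (nth_map 0) ?size_iota // nth_iota.
by rewrite nth_default // size_map size_iota.
Qed.

Lemma part_of_beads_sorted : sorted geq (part_of_beads B).
Proof.
by rewrite part_of_beadsE; apply: (sorted_filter geq_trans _ beads_parts_sorted).
Qed.

Lemma display_part_of_beads : display (size B) (part_of_beads B) = B.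
Proof.
apply: (@eq_from_nth _ 0); first by rewrite size_map size_iota.
move=> i; rewrite size_map size_iota => hi.
rewrite (nth_map 0) ?size_iota // nth_iota // /pt /= nth_part_of_beads hi.
by rewrite add0n; have := sorted_gtn_lb B_sorted hi; lia.
Qed.

End PartOfBeads.

Lemma size_part_of_beads (B : seq nat) : size (part_of_beads B) <= size B.
Proof.
rewrite /part_of_beads /= size_filter.
by apply: leq_trans (count_size _ _) _; rewrite size_map size_iota size_sort.
Qed.

Lemma part_of_beads_pos (B : seq nat) i :
  i < size (part_of_beads B) -> 0 < nth 0 (part_of_beads B) i.
Proof. by move/(mem_nth 0); rewrite /part_of_beads /= mem_filter => /andP[]. Qed.

Section Display.
Variables (n : nat) (la : seq nat).
Hypothesis la_sorted : sorted geq la.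

Lemma display_sorted : sorted gtn (display n la).
Proof.
apply: sorted_map_iota => i _ hi.
by have := sorted_geq_nth la_sorted (leqnSn i); rewrite /pt /=; lia.
Qed.

Lemma size_display : size (display n la) = n.
Proof. by rewrite size_map size_iota. Qed.

Lemma node_beads_above y i : i < n ->
  (y <= nth 0 la i) = (i.+1 <= beads_above n la (y + (n - i.+1))).
Proof. by move=> hi; rewrite leq_beads_above //= hi /=; lia. Qed.

End Display.

Section RelabelledBeads.
Variables (P : pred nat) (D : seq nat).
Hypothesis D_sorted : sorted gtn D.

Lemma relabelled_sorted : sorted gtn [seq relabel P p | p <- D & P p].
Proof.
rewrite sorted_map; apply: (@sub_in_sorted _ P gtn); last 2 first.
- exact: filter_all.
- exact: (sorted_filter gtn_trans _ D_sorted).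
move=> a b _ hb /= hab; have := relabel_mono P hab.
by rewrite relabelS (_ : P b = true) // addn1.
Qed.

Lemma count_relabelled_beads x :
  count (fun p => P p && (x <= p)) D =
  beads_above (count P D) (part_of_beads [seq relabel P p | p <- D & P p]) (relabel P x).
Proof.
have hsize : size [seq relabel P p | p <- D & P p] = count P D.
  by rewrite size_map size_filter.
rewrite /beads_above -hsize display_part_of_beads; last exact: relabelled_sorted.
rewrite count_map count_filter; apply: eq_count => p /=.
by case hp: (P p); rewrite ?andbF //= andbT -relabel_leq.
Qed.

End RelabelledBeads.

Lemma count_split (T : Type) (b a : pred T) (s : seq T) :
  count a s = count (fun x => b x && a x) s + count (fun x => ~~ b x && a x) s.
Proof. by elim: s => //= x s ->; case: (a x); case: (b x) => /=; lia. Qed.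

Section IParts.
Variables (I : pred int) (n : nat) (la : seq nat).
Hypothesis la_sorted : sorted geq la.
Let u := count (inI I) (display n la).

Lemma I_part_sorted : sorted geq (I_part I n la).
Proof. exact/part_of_beads_sorted/relabelled_sorted/display_sorted. Qed.

Lemma barI_part_sorted : sorted geq (barI_part I n la).
Proof. exact/part_of_beads_sorted/(relabelled_sorted (predC (inI I)))/display_sorted. Qed.

Lemma size_I_part : size (I_part I n la) <= u.
Proof. by apply: leq_trans (size_part_of_beads _) _; rewrite size_map size_filter. Qed.

Lemma size_barI_part : size (barI_part I n la) <= n - u.
Proof.
apply: leq_trans (size_part_of_beads _) _; rewrite size_map size_filter.
have := count_predC (inI I) (display n la); rewrite size_display /u.
by rewrite -[count (fun p => ~~ _) _]/(count (predC (inI I)) _); lia.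
Qed.

Lemma I_beads_above x :
  count (fun p => inI I p && (x <= p)) (display n la) =
  beads_above u (I_part I n la) (relabel (inI I) x).
Proof. exact/count_relabelled_beads/display_sorted. Qed.

Lemma barI_beads_above x :
  count (fun p => ~~ inI I p && (x <= p)) (display n la) =
  beads_above (n - u) (barI_part I n la) (relabel (predC (inI I)) x).
Proof.
rewrite (count_relabelled_beads (predC (inI I))); last exact: display_sorted.
suff -> : count (predC (inI I)) (display n la) = n - u by [].
by have := count_predC (inI I) (display n la); rewrite size_display /u; lia.
Qed.

Lemma node_IParts y i : i < n ->
  (y <= nth 0 la i) =
  (i.+1 <= beads_above u (I_part I n la) (relabel (inI I) (y + (n - i.+1))) +
           beads_above (n - u) (barI_part I n la)
             (relabel (predC (inI I)) (y + (n - i.+1)))).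
Proof.
move=> hi; rewrite (@node_beads_above n la) // -I_beads_above -barI_beads_above /beads_above.
by rewrite (count_split (inI I)).
Qed.

(* I-separation: if some bar-I bead lies at or above x, every I-position
   below x is occupied, hence the I-part has at most u - relabel x parts. *)
Lemma separated_I_part_size x :
  I_separated I n la ->
  0 < beads_above (n - u) (barI_part I n la) (relabel (predC (inI I)) x) ->
  relabel (inI I) x + size (I_part I n la) <= u.
Proof.
move=> hsep; rewrite -barI_beads_above -has_count => /hasP[q hqD /andP[hq hxq]].
set D := display n la; set w := relabel (inI I) x.
have full_below : forall p, p < x -> inI I p -> p \in D.
  move=> p hpx hp; apply: contraT => hpD.
  by have := hsep p q hp hpD hq hqD; lia.
have below : w <= count (fun p => inI I p && (p < x)) D.
  rewrite -size_filter /w /relabel -size_filter.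
  apply: uniq_leq_size; first exact/filter_uniq/iota_uniq.
  move=> p; rewrite !mem_filter mem_iota /= => /andP[hp hpx].
  by rewrite hp hpx full_below.
have split_u : count (fun p => inI I p && (p < x)) D +
               count (fun p => inI I p && (x <= p)) D = u.
  rewrite /u [in RHS](count_split (fun p => p < x)).
  by congr (_ + _); apply: eq_count => p /=; rewrite andbC // -leqNgt.
rewrite leqNgt; apply/negP => hw.
have : u - w + 1 <= count (fun p => inI I p && (x <= p)) D.
  rewrite I_beads_above leq_beads_above; last exact: I_part_sorted.
  have hlt : u - w < size (I_part I n la) by lia.
  have := part_of_beads_pos hlt; rewrite -/(I_part I n la) addn1 /=.
  have := size_I_part; rewrite -/u; lia.
lia.
Qed.

End IParts.

(* A ladder meets the rows 0 .. i1 (0-indexed) of a diagram every c rows: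
   going c rows up moves e - c columns right. *)
Definition ladder_length (c i1 : nat) : nat := (i1 %/ c).+1.

Lemma ladder_lengthP (c i1 d : nat) : 0 < c -> (d < ladder_length c i1) = (c * d <= i1).
Proof. by move=> hc0; rewrite /ladder_length ltnS leq_divRL // mulnC. Qed.

Section Ladder.
Variables (e c n : nat) (r c' : int).

Definition on_ladder (i y : nat) : Prop := exists k : int,
  Posz i.+1 = (r + k * (Posz (e - c) - Posz e))%R /\ Posz y = (c' + k * Posz (e - c))%R.

Lemma in_ladder_node i j :
  in_ladder e (e - c) r c' (Posz i.+1, Posz j.+1) = `[< on_ladder i j.+1 >].
Proof. by []. Qed.

Lemma ladder_anchor :
  (exists i y, [/\ i < n, 0 < y & on_ladder i y]) ->
  exists i1 y1, [/\ i1 < n, 0 < y1, on_ladder i1 y1 &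
    forall i y, i < n -> 0 < y -> on_ladder i y -> i <= i1].
Proof.
move=> [i [y [hi hy ho]]].
pose P i := `[< exists y, 0 < y /\ on_ladder i y >] && (i < n).
have exP : exists i, P i by exists i; rewrite /P hi andbT; apply/asboolP; exists y.
have ub : forall i, P i -> i <= n by move=> j /andP[_ /ltnW].
case: (ex_maxnP exP ub) => i1 /andP[/asboolP [y1 [hy1 hon1]] hi1] hmax.
exists i1, y1; split=> // j z hj hz hon; apply: hmax.
by rewrite /P hj andbT; apply/asboolP; exists z.
Qed.

Lemma ladder_count_empty (la : seq nat) :
  ~ (exists i y, [/\ i < n, 0 < y & on_ladder i y]) -> size la <= n ->
  count (in_ladder e (e - c) r c') (nodes la) = 0.
Proof.
move=> hnone hsz; apply/eqP; rewrite -leqn0 leqNgt -has_count; apply/hasP => -[x].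
move=> /allpairsPdep[i [j [hi hj ->]]]; rewrite in_ladder_node => /asboolP ho.
by apply: hnone; exists i, j.+1; split => //; rewrite mem_iota in hi; lia.
Qed.

Hypotheses (c_pos : 0 < c) (c_lt_e : c < e).

Section Anchor.
Variables (i1 y1 : nat).
Hypotheses (anchor_on : on_ladder i1 y1) (anchor_pos : 0 < y1).
Hypothesis anchor_max : forall i y, i < n -> 0 < y -> on_ladder i y -> i <= i1.

Lemma on_ladder_anchorE i y : i < n -> 0 < y -> on_ladder i y ->
  exists d, [/\ i = i1 - c * d, y = y1 + (e - c) * d & c * d <= i1].
Proof.
move=> hin hy h; have hle := anchor_max hin hy h.
case: anchor_on => k1 [h1a h1b]; case: h => k [ha hb].
have hrow : (Posz i1 - Posz i = (k - k1) * Posz c)%R by lia.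
have hcol : (Posz y - Posz y1 = (k - k1) * Posz (e - c))%R by lia.
have hD : (0 <= k - k1)%R by nia.
exists `|k - k1|%N; have E : Posz `|k - k1|%N = (k - k1)%R by rewrite gez0_abs.
by split; rewrite -E in hrow hcol; nia.
Qed.

Lemma on_ladder_step d : c * d <= i1 -> on_ladder (i1 - c * d) (y1 + (e - c) * d).
Proof.
move=> hd; case: anchor_on => k1 [h1a h1b].
have EX : (Posz (e - c) - Posz e = - Posz c)%R by lia.
have E2 : Posz (i1 - c * d).+1 = (Posz i1.+1 - Posz c * Posz d)%R by lia.
have E3 : Posz (y1 + (e - c) * d) = (Posz y1 + Posz (e - c) * Posz d)%R by lia.
exists (k1 + Posz d)%R; rewrite E2 E3 h1b; rewrite EX in h1a *; rewrite h1a.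
by split; ring.
Qed.

(* Lowest means the node c rows below is out of the region. *)
Lemma anchor_low : (y1 <= e - c) || (n <= i1 + c).
Proof.
apply/orP; case: (leqP y1 (e - c)) => h; [by left | right].
rewrite leqNgt; apply/negP => hn.
suff /(anchor_max hn) : on_ladder (i1 + c) (y1 - (e - c)) by lia.
case: anchor_on => k1 [h1a h1b].
have EX : (Posz (e - c) - Posz e = - Posz c)%R by lia.
have E2 : Posz (i1 + c).+1 = (Posz i1.+1 + Posz c)%R by lia.
have E3 : Posz (y1 - (e - c)) = (Posz y1 - Posz (e - c))%R by lia.
exists (k1 - 1)%R; rewrite E2 E3 h1b; rewrite EX in h1a *; rewrite h1a.
by split; ring.
Qed.

Definition ladder_node (d : nat) : int * int :=
  (Posz (i1 - c * d).+1, Posz (y1 + (e - c) * d)).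

Lemma mem_ladder_nodes (la : seq nat) x : size la <= n ->
  (x \in [seq x <- nodes la | in_ladder e (e - c) r c' x]) =
  (x \in [seq ladder_node d | d <- iota 0 (ladder_length c i1)
                            & y1 + (e - c) * d <= nth 0 la (i1 - c * d)]).
Proof.
move=> hsz; rewrite mem_filter; apply/andP/mapP.
- case=> hL /allpairsPdep[i [j [hi hj hx]]]; subst x.
  rewrite mem_iota in hi; rewrite mem_iota in hj.
  move: hL; rewrite in_ladder_node => /asboolP hL.
  have [d [hid hyd hcd]] := on_ladder_anchorE (i:=i) ltac:(lia) (ltn0Sn _) hL; subst i.
  exists d; last by rewrite /ladder_node -hyd.
  by rewrite mem_filter mem_iota /= ladder_lengthP // hcd andbT -hyd; lia.
- case=> d; rewrite mem_filter mem_iota ladder_lengthP // => /andP[hQ /andP[_ hd]] ->.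
  have hpos : 0 < y1 + (e - c) * d by rewrite addn_gt0 anchor_pos.
  split.
    rewrite /ladder_node -(prednK hpos) in_ladder_node prednK //.
    exact/asboolP/on_ladder_step.
  apply/allpairsPdep; exists (i1 - c * d), (y1 + (e - c) * d).-1.
  have hrow : i1 - c * d < size la.
    by case: (ltnP (i1 - c * d) (size la)) => // hge; move: hQ; rewrite nth_default //; lia.
  by rewrite !mem_iota /ladder_node prednK //; split => //; lia.
Qed.

Lemma ladder_count (la : seq nat) : size la <= n ->
  count (in_ladder e (e - c) r c') (nodes la) =
  count (fun d => y1 + (e - c) * d <= nth 0 la (i1 - c * d)) (iota 0 (ladder_length c i1)).
Proof.
move=> hsz; rewrite -!size_filter -(size_map ladder_node).
apply/perm_size/uniq_perm; last by move=> x; apply: mem_ladder_nodes.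
- apply/filter_uniq/allpairs_uniq_dep; first exact: iota_uniq.
    by move=> i _; exact: iota_uniq.
  move=> [a1 b1] [a2 b2] _ _ /= [] ha hb.
  have ha' : a1 = a2 by lia.
  by subst a2; have -> : b1 = b2 by lia.
- rewrite map_inj_in_uniq; first exact/filter_uniq/iota_uniq.
  move=> d1 d2 _ _ [] _ h; apply/eqP; rewrite -(eqn_pmul2l (_ : 0 < e - c)); last by lia.
  by apply/eqP; lia.
Qed.

End Anchor.

End Ladder.

Lemma count_add (T : Type) (a b c : pred T) (s : seq T) :
  (forall x, (a x : nat) = b x + c x) -> count a s = count b s + count c s.
Proof. by move=> h; elim: s => //= x s ->; rewrite h; lia. Qed.

Lemma count_add2 (T : eqType) (a b c d : pred T) (s : seq T) :
  {in s, forall x, (a x : nat) + b x = c x + d x} ->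
  count a s + count b s = count c s + count d s.
Proof.
elim: s => //= x s IH h; have := h x (mem_head x s).
have {}IH : count a s + count b s = count c s + count d s.
  by apply: IH => y hy; apply: h; rewrite inE hy orbT.
lia.
Qed.

Lemma count_iota_single (P : pred nat) K d0 :
  d0 < K -> (forall d, d < K -> P d = (d == d0)) -> count P (iota 0 K) = 1.
Proof.
move=> hd0 h; rewrite (@eq_in_count _ _ (pred1 d0)).
  by rewrite count_uniq_mem ?iota_uniq // mem_iota hd0.
by move=> d; rewrite mem_iota => /andP[_ hd]; rewrite h.
Qed.

Lemma leq_split (z B B' : nat) : B' <= B ->
  ((z <= B) : nat) = (z <= B') + ((B' < z) && (z <= B)).
Proof. by move=> h; case: (leqP z B') => h1; case: (leqP z B) => h2 //=; lia. Qed.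

Lemma count_progression_window (x0 k B K : nat) :
  0 < k -> k <= B -> x0 <= B -> (B - x0) %/ k < K ->
  count (fun d => (B - k < x0 + d * k) && (x0 + d * k <= B)) (iota 0 K) = 1.
Proof.
move=> hk hkB hx0 hK; apply: (count_iota_single hK) => d _.
have E := divn_eq (B - x0) k; have hr := ltn_pmod (B - x0) hk.
set q := (B - x0) %/ k in E hK *; set r := (B - x0) %% k in E hr.
apply/andP/eqP => [[h1 h2] | ->]; last by lia.
have : d * k <= q * k + r by lia.
have : q * k + r < d * k + k by lia.
by nia.
Qed.

Lemma count_ladder_rows_window (c i1 a : nat) : 0 < c -> a <= i1 ->
  count (fun d => (a <= i1 - c * d) && (i1 - c * d < a + c)) (iota 0 (ladder_length c i1)) = 1.
Proof.
move=> hc ha; set q := (i1 - a) %/ c.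
have hqK : q < ladder_length c i1 by rewrite /ladder_length ltnS leq_div2r // leq_subr.
apply: (count_iota_single hqK) => d; rewrite ladder_lengthP // => hd.
have E := divn_eq (i1 - a) c; have hr := ltn_pmod (i1 - a) hc.
rewrite -/q in E; set r := (i1 - a) %% c in E hr.
apply/andP/eqP => [[h1 h2] | ->]; last by lia.
have : c * d <= q * c + r by lia.
have : q * c + r < c * d + c by lia.
by nia.
Qed.

Section LadderTests.
Variables (e c n u : nat) (PI : pred nat).
Hypotheses (PI_periodic : forall p, PI (p + e) = PI p) (PI_count : count PI (iota 0 e) = c).
Hypotheses (c_pos : 0 < c) (c_lt_e : c < e).

Lemma predC_periodic p : predC PI (p + e) = predC PI p.
Proof. by rewrite /= PI_periodic. Qed.

Lemma predC_count : count (predC PI) (iota 0 e) = e - c.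
Proof. by have := count_predC PI (iota 0 e); rewrite size_iota PI_count; lia. Qed.

Lemma relabel_I_periods x d : relabel PI (x + e * d) = relabel PI x + d * c.
Proof. by rewrite relabel_add_periods // PI_count. Qed.

Lemma relabel_barI_periods x d :
  relabel (predC PI) (x + e * d) = relabel (predC PI) x + d * (e - c).
Proof. by rewrite relabel_add_periods ?predC_count //; exact: predC_periodic. Qed.

Definition node_pos (y i : nat) : nat := y + (n - i.+1).

Definition node_test (a b : seq nat) (y i : nat) : bool :=
  i.+1 <= beads_above u a (relabel PI (node_pos y i)) +
          beads_above (n - u) b (relabel (predC PI) (node_pos y i)).

Definition separated_parts (a b : seq nat) : Prop :=
  forall x, 0 < beads_above (n - u) b (relabel (predC PI) x) -> relabel PI x + size a <= u.

(* Separation survives removing e - c from the largest bar-I part while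
   adding c parts to the I-part: a bar-I bead above x after the move comes
   from one above x + e before it. *)
Lemma separated_parts_shift (al be al' be' : seq nat) :
  sorted geq be -> sorted geq be' -> e - c <= nth 0 be 0 ->
  nth 0 be' 0 = nth 0 be 0 - (e - c) -> size al' = size al + c ->
  separated_parts al be -> separated_parts al' be'.
Proof.
move=> hbe hbe' hgap hbe'0 hsize hsep x hx.
have hx' : 0 < beads_above (n - u) be (relabel (predC PI) (x + e * 1)).
  move: hx; rewrite !leq_beads_above //= hbe'0 relabel_barI_periods.
  by case/andP=> h1 h2; apply/andP; split => //; lia.
by have := hsep _ hx'; rewrite relabel_I_periods hsize; lia.
Qed.

Variables (i1 y1 : nat).
Hypothesis anchor_row : i1 < n.
Let K := ladder_length c i1.
Let X := node_pos y1 i1.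
Let pos d := node_pos (y1 + (e - c) * d) (i1 - c * d).

Definition ladder_test (a b : seq nat) (d : nat) : bool :=
  node_test a b (y1 + (e - c) * d) (i1 - c * d).

Lemma ladder_pos d : d < K -> pos d = X + e * d.
Proof.
rewrite ladder_lengthP // => hd; rewrite /pos /X /node_pos.
have : (e - c) * d + c * d = e * d by rewrite -mulnDl subnK // ltnW.
lia.
Qed.

Definition ladder_level : nat := i1.+1 + relabel PI X.

Lemma ladder_levelE d : d < K -> (i1 - c * d).+1 + relabel PI (pos d) = ladder_level.
Proof.
move=> hd; have := hd; rewrite ladder_lengthP // => hcd.
by rewrite ladder_pos // relabel_I_periods /ladder_level; lia.
Qed.

Definition I_test (a : seq nat) (d : nat) : bool :=
  (i1 - c * d < u) && (ladder_level <= nth 0 a (i1 - c * d) + u).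
Definition barI_test (b : seq nat) (d : nat) : bool :=
  ladder_level <= u + beads_above (n - u) b (relabel (predC PI) (pos d)).

Lemma I_testE (a : seq nat) d : sorted geq a -> d < K ->
  ((i1 - c * d).+1 <= beads_above u a (relabel PI (pos d))) = I_test a d.
Proof.
move=> ha hd; have := ladder_levelE hd; rewrite leq_beads_above // /I_test /=.
by move=> hlev; apply/andP/andP => -[h1 h2]; split; lia.
Qed.

(* A ladder test is the sum of the two contributions, up to a term that does
   not depend on the parts: when some bar-I bead is above the tested
   position, separation fills all I-positions below it. *)
Lemma ladder_test_split (a b : seq nat) d : sorted geq a -> separated_parts a b -> d < K ->
  (ladder_test a b d : nat) + (ladder_level <= u) = barI_test b d + I_test a d.
Proof.
move=> ha hsep hd; rewrite /ladder_test /node_test /barI_test -/(pos d) -I_testE //.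
have hlev := ladder_levelE hd.
set t := (i1 - c * d).+1 in hlev *; set w := relabel PI (pos d) in hlev *.
set mB := beads_above _ b _; set mI := beads_above u a w.
case: (posnP mB) => [-> | hmB].
  by rewrite !addn0 addnC.
have hw := hsep _ hmB; rewrite -/w in hw.
have -> : mI = u - w by apply: beads_above_full => //; lia.
by congr (_ + _); congr nat_of_bool; apply/idP/idP; lia.
Qed.

Lemma ladder_count_split (a b : seq nat) : sorted geq a -> separated_parts a b ->
  count (ladder_test a b) (iota 0 K) + count (fun _ => ladder_level <= u) (iota 0 K) =
  count (barI_test b) (iota 0 K) + count (I_test a) (iota 0 K).
Proof.
move=> ha hsep; apply: count_add2 => d; rewrite mem_iota => /andP[_ hd].
exact: ladder_test_split.
Qed.

Lemma barI_test_threshold (b : seq nat) d : u < ladder_level ->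
  barI_test b d = (ladder_level - u <= beads_above (n - u) b (relabel (predC PI) (pos d))).
Proof. by move=> hlev; rewrite /barI_test; apply/idP/idP; lia. Qed.

Lemma I_test_threshold (g : seq nat) d : sorted geq g -> size g <= u -> u < ladder_level ->
  I_test g d = (i1 - c * d < count (fun x => ladder_level - u <= x) g).
Proof.
move=> hg hsz hlev; rewrite /I_test.
have -> : (ladder_level <= nth 0 g (i1 - c * d) + u) = (ladder_level - u <= nth 0 g (i1 - c * d)).
  by apply/idP/idP; lia.
rewrite leq_nth_count //; last by lia.
case: (ltnP (i1 - c * d) (count _ g)) => h; last by rewrite andbF.
by rewrite (leq_trans h (leq_trans (count_size _ g) hsz)).
Qed.

(* Comparison of two pairs of parts (al, be) and (al', be') related as the
   parts of nu and xi: al' gains c parts equal to s, and the first s parts of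
   be lose e - c each. *)
Section Transfer.
Variables (s : nat) (al be al' be' : seq nat).
Hypotheses (al_sorted : sorted geq al) (be_sorted : sorted geq be).
Hypotheses (al'_sorted : sorted geq al') (be'_sorted : sorted geq be').
Hypotheses (size_al : size al <= u) (size_al' : size al' <= u).
Hypotheses (sep : separated_parts al be) (sep' : separated_parts al' be').
Hypothesis I_parts_rel : forall th, 0 < th ->
  count (fun x => th <= x) al' = count (fun x => th <= x) al + (th <= s) * c.
Hypothesis barI_parts_rel : forall i,
  nth 0 be' i = if i < s then nth 0 be i - (e - c) else nth 0 be i.
Hypotheses (s_pos : 0 < s) (s_le : s <= n - u) (gap : (e - c) + nth 0 be s <= nth 0 be s.-1).
Hypothesis anchor_low : (y1 <= e - c) || (n <= i1 + c).

Let contributions (a b : seq nat) := count (barI_test b) (iota 0 K) + count (I_test a) (iota 0 K).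

Lemma contributions_low : ladder_level <= u -> contributions al be = contributions al' be'.
Proof.
move=> hlev; congr (_ + _); apply: eq_count => d; rewrite /barI_test /I_test.
  by rewrite !(leq_trans hlev (leq_addr _ _)).
by rewrite !(leq_trans hlev (leq_addl _ _)).
Qed.

Lemma contributions_high : u + s < ladder_level -> contributions al be = contributions al' be'.
Proof.
move=> hlev; congr (_ + _); apply: eq_count => d.
  rewrite !barI_test_threshold ?(leq_trans _ hlev) ?leq_addr // !leq_beads_above //.
  by rewrite barI_parts_rel ifF //; apply/negbTE; rewrite -leqNgt; lia.
rewrite !I_test_threshold ?(leq_trans _ hlev) ?leq_addr // I_parts_rel; last by lia.
by rewrite (_ : ladder_level - u <= s = false) ?mul0n ?addn0 //; apply/negbTE; lia.
Qed.

(* Level in (u, u + s]: the threshold th = level - u is at most s, so exactly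
   one ladder node changes status on each side. *)
Section Middle.
Hypotheses (level_above : u < ladder_level) (level_below : ladder_level <= u + s).
Let th := ladder_level - u.
Let B := nth 0 be th.-1 + (n - u - th).
Let rB := relabel (predC PI).

Lemma mid_gap : e - c <= nth 0 be th.-1.
Proof. by have := sorted_geq_nth be_sorted (i := th.-1) (j := s.-1) ltac:(lia); lia. Qed.

Lemma mid_bead_above x : rB x <= B -> 0 < beads_above (n - u) be (rB x).
Proof.
rewrite leq_beads_above //= => hx; apply/andP; split; first by lia.
by have := sorted_geq_nth be_sorted (leq0n th.-1); lia.
Qed.

Lemma mid_anchor_below : rB X <= B.
Proof.
have hsplit := relabel_predC PI X; have hgap := mid_gap.
have hX : X = y1 + (n - i1.+1) by [].
have hlev : ladder_level = i1.+1 + relabel PI X by [].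
rewrite /rB /B /th in hgap *.
case/orP: anchor_low => hlow; first lia.
have hXe : X <= e.
  rewrite leqNgt; apply/negP => hXe.
  by have := relabel_mono PI (ltnW hXe); rewrite [X in X <= _ -> _]/relabel PI_count; lia.
by have := relabel_mono (predC PI) hXe; rewrite [X in _ <= X -> _]/relabel predC_count; lia.
Qed.

Lemma mid_rows : count (fun x => th <= x) al <= i1.
Proof.
have := sep (mid_bead_above mid_anchor_below); have := count_size (fun x => th <= x) al.
by have : ladder_level = i1.+1 + relabel PI X by []; rewrite /th; lia.
Qed.

Lemma mid_window_range : (B - rB X) %/ (e - c) < K.
Proof.
set d1 := (B - rB X) %/ (e - c).
have hd1 : rB (X + e * d1) <= B.
  have hdiv := leq_divM (B - rB X) (e - c); have hanchor := mid_anchor_below.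
  by rewrite -/d1 /rB in hdiv hanchor *; rewrite relabel_barI_periods; lia.
have := sep (mid_bead_above hd1); rewrite relabel_I_periods ladder_lengthP // mulnC.
by have : ladder_level = i1.+1 + relabel PI X by []; lia.
Qed.

Lemma contributions_mid : contributions al be = contributions al' be'.
Proof.
set a := count (fun x => th <= x) al.
have th_pos : (th == 0) = false by apply/negbTE; rewrite /th; lia.
have th_le_s : th <= s by rewrite /th; lia.
have th_le : th <= n - u by lia.
have I_al d : I_test al d = (i1 - c * d < a) by rewrite I_test_threshold.
have I_al' d : I_test al' d = (i1 - c * d < a + c).
  by rewrite I_test_threshold // -/th I_parts_rel ?th_le_s ?mul1n // lt0n th_pos.
have barI_be d : barI_test be d = (rB (pos d) <= B).
  by rewrite barI_test_threshold // leq_beads_above // -/th th_pos th_le.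
have barI_be' d : barI_test be' d = (rB (pos d) <= B - (e - c)).
  rewrite barI_test_threshold // leq_beads_above // -/th th_pos th_le /=.
  rewrite barI_parts_rel ifT; last by lia.
  by have := mid_gap; rewrite /B => hgap; congr (_ <= _); lia.
rewrite /contributions (eq_count I_al) (eq_count I_al') (eq_count barI_be) (eq_count barI_be').
rewrite (count_add (b := fun d => rB (pos d) <= B - (e - c))
                   (c := fun d => (B - (e - c) < rB (pos d)) && (rB (pos d) <= B))); last first.
  by move=> d; apply: leq_split; rewrite leq_subr.
rewrite [count (fun d => _ < a + c) _](count_add (b := fun d => i1 - c * d < a)
                   (c := fun d => (a <= i1 - c * d) && (i1 - c * d < a + c))); last first.
  by move=> d; apply: leq_split; rewrite leq_addr.
have window_barI : count (fun d => (B - (e - c) < rB (pos d)) && (rB (pos d) <= B)) (iota 0 K) = 1.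
  have hkB : e - c <= B by have := mid_gap; lia.
  rewrite -(count_progression_window _ hkB mid_anchor_below mid_window_range); last by lia.
  apply: eq_in_count => d; rewrite mem_iota => /andP[_ hd].
  by rewrite /rB ladder_pos // relabel_barI_periods.
by have := count_ladder_rows_window c_pos mid_rows; rewrite -/a -/K; lia.
Qed.

End Middle.

Lemma ladder_counts_transfer :
  count (ladder_test al be) (iota 0 K) = count (ladder_test al' be') (iota 0 K).
Proof.
have := ladder_count_split al_sorted sep; have := ladder_count_split al'_sorted sep'.
suff : contributions al be = contributions al' be' by rewrite /contributions; lia.
case: (leqP ladder_level u) => hlow; first exact: contributions_low.
case: (leqP ladder_level (u + s)) => hhigh; first exact: contributions_mid.
exact: contributions_high.
Qed.

End Transfer.

End LadderTests.

Lemma count_parcat (c s : nat) (al : seq nat) th :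
  count (fun x => th <= x) (parcat c [:: s] al) = count (fun x => th <= x) al + (th <= s) * c.
Proof. by rewrite /parcat (permP (permEl (perm_sort geq _))) count_cat /= cats0 count_nseq. Qed.

Lemma size_parcat (c s : nat) (al : seq nat) : size (parcat c [:: s] al) = size al + c.
Proof. by rewrite /parcat size_sort size_cat /= cats0 size_nseq. Qed.

(* tau k s lowers the first s parts by k; the gap keeps it decreasing. *)
Lemma nth_tau (k s : nat) (be : seq nat) i : sorted geq be -> 0 < s ->
  k + nth 0 be s <= nth 0 be s.-1 ->
  nth 0 (tau k s be) i = if i < s then nth 0 be i - k else nth 0 be i.
Proof.
move=> hbe hs hgap; rewrite /tau nth_filter_pos.
  case: (ltnP i (size be)) => hi; first by rewrite (nth_map 0) ?size_iota // nth_iota.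
  by rewrite nth_default ?size_map ?size_iota // nth_default //; case: ifP.
apply: sorted_map_iota => j _ hj /=; have := sorted_geq_nth hbe (leqnSn j).
case: (ltnP j.+1 s) => h1; first by rewrite (ltnW h1); lia.
case: (ltnP j s) => h2; last by [].
have hs' : s = j.+1 by lia.
by move: hgap; rewrite hs' /=; lia.
Qed.

Lemma gap_after (k s : nat) (be : seq nat) : 0 < s -> 0 < k ->
  k <= pt be s - pt be s.+1 -> k + nth 0 be s <= nth 0 be s.-1 /\ s <= size be.
Proof.
rewrite /pt /= => hs hk hgap; split; first by lia.
by case: (ltnP s.-1 (size be)) => h; [lia | move: hgap; rewrite nth_default //; lia].
Qed.

Lemma card_residues (e : nat) (I : pred int) :
  #|[set i : 'I_e | I (Posz (nat_of_ord i))]| = count (inI I) (iota 0 e).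
Proof.
rewrite -sum1_card (eq_bigl (fun i : 'I_e => inI I i)); last by move=> i; rewrite inE.
by rewrite -(big_mkord (fun i => inI I i) (fun _ => 1)) sum1_count /index_iota subn0.
Qed.

Lemma ladder_count_parts (I : pred int) (e c n : nat) (r c' : int) (i1 y1 : nat)
    (la : seq nat) :
  0 < c -> c < e -> i1 < n -> on_ladder e c r c' i1 y1 -> 0 < y1 ->
  (forall i y, i < n -> 0 < y -> on_ladder e c r c' i y -> i <= i1) ->
  sorted geq la -> size la <= n ->
  count (in_ladder e (e - c) r c') (nodes la) =
  count (ladder_test e c n (count (inI I) (display n la)) (inI I) i1 y1
           (I_part I n la) (barI_part I n la)) (iota 0 (ladder_length c i1)).
Proof.
move=> c_pos c_lt_e hi1 hon hy1 hmax hla hsz.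
rewrite (ladder_count c_pos c_lt_e hon hy1 hmax hsz).
apply: eq_in_count => d; rewrite mem_iota ladder_lengthP // => /andP[_ hd].
by rewrite (@node_IParts I n la hla) //; lia.
Qed.

Section NuXi.
Variables (e c n u : nat) (I : pred int) (nu xi : seq nat) (s : nat).
Hypotheses (PI_periodic : forall p, inI I (p + e) = inI I p)
           (PI_count : count (inI I) (iota 0 e) = c) (c_pos : 0 < c) (c_lt_e : c < e).
Hypotheses (nu_sorted : sorted geq nu) (xi_sorted : sorted geq xi).
Hypotheses (nu_u : count (inI I) (display n nu) = u) (xi_u : count (inI I) (display n xi) = u).
Hypotheses (nu_sep : I_separated I n nu) (s_pos : 0 < s).
Hypothesis gap : e - c <= pt (barI_part I n nu) s - pt (barI_part I n nu) s.+1.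
Hypotheses (I_xi : I_part I n xi = parcat c [:: s] (I_part I n nu))
           (barI_xi : barI_part I n xi = tau (e - c) s (barI_part I n nu)).

Lemma gap_nu : e - c + nth 0 (barI_part I n nu) s <= nth 0 (barI_part I n nu) s.-1 /\
               s <= size (barI_part I n nu).
Proof. by apply: gap_after => //; lia. Qed.

Lemma nth_barI_xi i : nth 0 (barI_part I n xi) i =
  if i < s then nth 0 (barI_part I n nu) i - (e - c) else nth 0 (barI_part I n nu) i.
Proof. by rewrite barI_xi nth_tau //; [exact: barI_part_sorted | case: gap_nu]. Qed.

Lemma separated_nu : separated_parts n u (inI I) (I_part I n nu) (barI_part I n nu).
Proof. by move=> x; rewrite -nu_u; exact: separated_I_part_size. Qed.

Lemma separated_xi : separated_parts n u (inI I) (I_part I n xi) (barI_part I n xi).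
Proof.
apply: (separated_parts_shift PI_periodic PI_count c_pos c_lt_e _ _ _ _ _ separated_nu).
- exact: barI_part_sorted.
- exact: barI_part_sorted.
- have [hgap _] := gap_nu.
  by have := sorted_geq_nth (barI_part_sorted I n nu_sorted) (leq0n s.-1); lia.
- by rewrite nth_barI_xi s_pos.
- by rewrite I_xi size_parcat.
Qed.

Lemma ladder_counts_nu_xi (r c' : int) (i1 y1 : nat) : i1 < n ->
  (y1 <= e - c) || (n <= i1 + c) ->
  count (ladder_test e c n u (inI I) i1 y1 (I_part I n nu) (barI_part I n nu))
    (iota 0 (ladder_length c i1)) =
  count (ladder_test e c n u (inI I) i1 y1 (I_part I n xi) (barI_part I n xi))
    (iota 0 (ladder_length c i1)).
Proof.
move=> hi1 hlow; have [hgap s_le] := gap_nu.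
apply: (ladder_counts_transfer PI_periodic PI_count c_pos c_lt_e hi1 _ _ _ _ _ _
          separated_nu separated_xi _ nth_barI_xi s_pos _ hgap hlow).
- exact: I_part_sorted.
- exact: barI_part_sorted.
- exact: I_part_sorted.
- exact: barI_part_sorted.
- by rewrite -nu_u; exact: size_I_part.
- by rewrite -xi_u; exact: size_I_part.
- by move=> th _; rewrite I_xi count_parcat.
- by apply: leq_trans s_le _; rewrite -nu_u; exact: size_barI_part.
Qed.

End NuXi.

Theorem mainTheorem17 (e c n u : nat) (I : pred int) (nu xi : seq nat) (s : nat) :
  4 <= e ->
  (forall z : int, I (z + Posz e)%R = I z) ->
  #|[set i : 'I_e | I (Posz (nat_of_ord i))]| = c ->
  2 <= c <= e - 2 ->
  e %| n ->
  u <= n ->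
  is_partition nu -> size nu <= n ->
  uI_partition I n u nu ->
  I_separated I n nu ->
  1 <= s ->
  e - c <= pt (barI_part I n nu) s - pt (barI_part I n nu) s.+1 ->
  (forall r, 1 <= r < s ->
     pt (barI_part I n nu) r - pt (barI_part I n nu) r.+1 < e - c) ->
  is_partition xi -> size xi <= n ->
  uI_partition I n u xi ->
  I_part I n xi = parcat c [:: s] (I_part I n nu) ->
  barI_part I n xi = tau (e - c) s (barI_part I n nu) ->
  ladder_equiv e (e - c) nu xi.
Proof.
move=> he hper hcard hc _ _ hnu hsznu hunu hsep hs hgap _ hxi hszxi huxi hIxi hbarIxi r c'.
have c_pos : 0 < c by lia.
have c_lt_e : c < e by lia.
have PI_periodic p : inI I (p + e) = inI I p by rewrite /inI PoszD hper.
have PI_count : count (inI I) (iota 0 e) = c by rewrite -card_residues.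
have nu_sorted : sorted geq nu by case/andP: hnu.
have xi_sorted : sorted geq xi by case/andP: hxi.
have [hex | hnone] := pselect (exists i y, [/\ i < n, 0 < y & on_ladder e c r c' i y]);
  last by rewrite !(ladder_count_empty hnone).
have [i1 [y1 [hi1 hy1 hon hmax]]] := ladder_anchor hex.
rewrite !(ladder_count_parts I c_pos c_lt_e hi1 hon hy1 hmax) // hunu huxi.
apply: (ladder_counts_nu_xi PI_periodic PI_count c_pos c_lt_e nu_sorted xi_sorted hunu huxi
          hsep hs hgap hIxi hbarIxi r c' hi1).
exact: (anchor_low c_pos c_lt_e hon hy1 hmax).
Qed.
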